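(* Let $k\ge2$, $n\ge1$ be integers, let $\bar{\mathcal{P}}\in\mathbb{R}^{[k,n]}$ be a columnwise-substochastic tensor, $\mathbf{v}\in\mathbb{R}^n$ a stochastic vector and $\alpha\in[0,1)$. Define the tensor $\mathcal{P}\in\mathbb{R}^{[k,n]}$ by $p_{ii_2\dots i_k}:=\bar p_{ii_2\dots i_k}+v_i\left(1-\sum_{\ell=1}^n\bar p_{\ell i_2\dots i_k}\right)$. If $\mathbf{x}$ solves the MPR problem $$\mathbf{x}=\alpha\mathcal{P}\mathbf{x}^{k-1}+(1-\alpha)\mathbf{v},\quad\mathbf{x}\in\mathbb{R}^n_+,\quad\mathbf{e}^T\mathbf{x}=1,$$ then $\mathbf{y}:=\left(1-\alpha\mathbf{e}^T(\bar{\mathcal{P}}\mathbf{x}^{k-1})\right)^{-\frac{1}{k-1}}\mathbf{x}$ is a nonnegative solution of the MLPPR system $(\mathbf{e}^T\mathbf{y})^{k-2}\mathbf{y}-\alpha\bar{\mathcal{P}}\mathbf{y}^{k-1}=\mathbf{v}$.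
   Context: For $\mathcal{P}\in\mathbb{R}^{[k,n]}$ (real tensors of order $k$, dimension $n$) and $\mathbf{y}\in\mathbb{R}^n$, $(\mathcal{P}\mathbf{y}^{k-1})_i=\sum_{i_2,\dots,i_k}p_{i i_2\dots i_k}y_{i_2}\cdots y_{i_k}$. $\bar{\mathcal{P}}$ is columnwise-substochastic if its entries are nonnegative and $\sum_{i}\bar p_{i i_2\dots i_k}\le1$ for all $i_2,\dots,i_k$. $\mathbf{e}$ is the all-ones vector; a stochastic vector is nonnegative with entries summing to $1$. The tensor $\mathcal{P}$ (the ''dangling correction'' $\mathcal{P}=\bar{\mathcal{P}}+\mathbf{v}\circ(\mathbf{e}^{\circ(k-1)}-\bar{\mathcal{P}}\bar\times_1\mathbf{e})$) is columnwise-stochastic. *)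

From HB Require Import structures.
From mathcomp Require Import all_boot all_order all_algebra.
From mathcomp Require Import all_classical all_reals.
From mathcomp Require Import exp.
Set Implicit Arguments. Unset Strict Implicit. Unset Printing Implicit Defensive.
Import Order.TTheory GRing.Theory Num.Theory.
Local Open Scope ring_scope.

Definition idx (k n : nat) := {ffun 'I_k.-1 -> 'I_n}.

(* A real tensor P in R^{[k,n]}: entry p_{i i_2 ... i_k} = P i f, f = (i_2,...,i_k). *)
Definition tensor (R : Type) (k n : nat) := 'I_n -> idx k n -> R.

Definition tapply (R : ringType) (k n : nat) (P : tensor R k n) (y : 'I_n -> R)
  : 'I_n -> R :=
  fun i => \sum_(f : idx k n) P i f * \prod_(j < k.-1) y (f j).

Definition col_substochastic (R : numDomainType) (k n : nat) (P : tensor R k n) :=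
  (forall i f, 0 <= P i f) /\ (forall f, \sum_(i < n) P i f <= 1).

Definition stochastic_vec (R : numDomainType) (n : nat) (v : 'I_n -> R) :=
  (forall i, 0 <= v i) /\ \sum_(i < n) v i = 1.

Definition dangling (R : ringType) (k n : nat) (Pb : tensor R k n) (v : 'I_n -> R)
  : tensor R k n :=
  fun i f => Pb i f + v i * (1 - \sum_(l < n) Pb l f).

From HB Require Import structures.
From mathcomp Require Import all_boot all_order all_algebra.
From mathcomp Require Import all_classical all_reals.
From mathcomp Require Import exp.
From mathcomp Require Import ring.
Import Order.TTheory GRing.Theory Num.Theory.
Local Open Scope ring_scope.

(* The dangling correction adds to [Pb x^{k-1}] the vector [v] times the mass
   [(e^T x)^{k-1} - e^T (Pb x^{k-1})] that [Pb] loses, so on the simplex the MPR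
   equation reads [x - alpha Pb x^{k-1} = c v] with [c = 1 - alpha e^T (Pb x^{k-1})],
   and [0 < c] by substochasticity.  Since [y |-> Pb y^{k-1}] is homogeneous of degree
   [k-1], rescaling [x] by [t] with [t^{k-1} = 1/c] gives
   [(e^T y)^{k-2} y - alpha Pb y^{k-1} = t^{k-1} (x - alpha Pb x^{k-1}) = v]. *)

Section TensorAlgebra.
Context {R : comNzRingType} {k n : nat}.
Implicit Types (P : tensor R k n) (x : 'I_n -> R).

Lemma sum_idx_prod x :
  \sum_(f : idx k n) \prod_(j < k.-1) x (f j) = (\sum_(i < n) x i) ^+ k.-1.
Proof.
have := @bigA_distr_bigA R 0 1 *%R +%R _ _ (fun (j : 'I_k.-1) (i : 'I_n) => x i).
by rewrite /= prodr_const card_ord => ->.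
Qed.

Lemma tapplyZ P (t : R) x i :
  tapply P (fun l => t * x l) i = t ^+ k.-1 * tapply P x i.
Proof.
rewrite /tapply mulr_sumr; apply: eq_bigr => f _.
by rewrite big_split /= prodr_const card_ord mulrCA.
Qed.

Lemma sum_tapplyE P x :
  \sum_(l < n) tapply P x l =
  \sum_(f : idx k n) (\sum_(l < n) P l f) * \prod_(j < k.-1) x (f j).
Proof.
by rewrite /tapply exchange_big; apply: eq_bigr => f _; rewrite mulr_suml.
Qed.

Lemma tapply_dangling P v x i :
  tapply (dangling P v) x i =
  tapply P x i + v i * ((\sum_(l < n) x l) ^+ k.-1 - \sum_(l < n) tapply P x l).
Proof.
rewrite -sum_idx_prod sum_tapplyE -sumrB mulr_sumr -big_split /=.
by apply: eq_bigr => f _; rewrite /dangling; ring.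
Qed.

End TensorAlgebra.

Lemma sum_tapply_le {R : numDomainType} {k n : nat} (P : tensor R k n)
    (x : 'I_n -> R) :
  col_substochastic P -> (forall i, 0 <= x i) ->
  \sum_(l < n) tapply P x l <= (\sum_(i < n) x i) ^+ k.-1.
Proof.
move=> [_ P_le1] x_ge0; rewrite sum_tapplyE -sum_idx_prod.
by apply: ler_sum => f _; rewrite ler_piMl ?prodr_ge0.
Qed.

Lemma mlppr_of_scaled {F : fieldType} {k n : nat} (P : tensor F k n)
    (v x : 'I_n -> F) (alpha c t : F) :
  (2 <= k)%N -> c != 0 -> t ^+ k.-1 = c^-1 -> \sum_(i < n) x i = 1 ->
  (forall i, x i - alpha * tapply P x i = c * v i) ->
  let y := fun i => t * x i in
  forall i, (\sum_(j < n) y j) ^+ (k - 2) * y i - alpha * tapply P y i = v i.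
Proof.
move=> k_ge2 c_neq0 tE x_sum1 x_eq y i.
have -> : \sum_(j < n) y j = t by rewrite -mulr_sumr x_sum1 mulr1.
have km1 : k.-1 = (k - 2).+1 by case: (k) k_ge2 => [|[|k']] //= _; rewrite subn2.
rewrite tapplyZ mulrA -exprSr -km1 tE [alpha * _]mulrCA -mulrBr.
by rewrite x_eq mulrA mulVf ?mul1r.
Qed.

Lemma powR_inv_root {R : realType} (c : R) (m : nat) :
  0 < c -> (0 < m)%N -> (c `^ (- m%:R^-1)) ^+ m = c^-1.
Proof.
move=> c_gt0 m_gt0.
rewrite -powR_mulrn ?powR_ge0 // -powRrM mulNr mulVf ?powR_inv1 ?ltW //.
by rewrite pnatr_eq0 -lt0n.
Qed.

Theorem lemma3p13 (R : realType) (k n : nat) (hk : (2 <= k)%N) (hn : (1 <= n)%N)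
  (Pb : tensor R k n) (v : 'I_n -> R) (alpha : R) (x : 'I_n -> R) :
  col_substochastic Pb -> stochastic_vec v -> 0 <= alpha -> alpha < 1 ->
  (forall i, x i = alpha * tapply (dangling Pb v) x i + (1 - alpha) * v i) ->
  (forall i, 0 <= x i) -> \sum_(i < n) x i = 1 ->
  let y := fun i => (1 - alpha * \sum_(l < n) tapply Pb x l) `^ (- (k.-1)%:R^-1) * x i in
  (forall i, 0 <= y i) /\
  (forall i, (\sum_(j < n) y j) ^+ (k - 2) * y i - alpha * tapply Pb y i = v i).
Proof.
move=> Pb_sub _ alpha_ge0 alpha_lt1 x_fix x_ge0 x_sum1 y.
set s := \sum_(l < n) tapply Pb x l.
have := sum_tapply_le Pb x Pb_sub x_ge0; rewrite x_sum1 expr1n -/s => s_le1.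
have c_gt0 : 0 < 1 - alpha * s.
  by rewrite subr_gt0 (le_lt_trans _ alpha_lt1) // ler_piMr.
have x_eq i : x i - alpha * tapply Pb x i = (1 - alpha * s) * v i.
  by rewrite {1}x_fix tapply_dangling x_sum1 expr1n -/s; ring.
split=> [i|]; first by rewrite mulr_ge0 ?powR_ge0.
apply: mlppr_of_scaled x_sum1 x_eq; [exact: hk | exact: lt0r_neq0 |].
by rewrite powR_inv_root // -subn1 subn_gt0.
Qed.
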